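(* Let $X$ be a regular Hausdorff space. If $X$ contains a closed subspace homeomorphic to the sequential fan $S_\omega$, then $\mathcal{F}_2(X)$ contains a closed subspace homeomorphic to the Arens space $S_2$.
   Context: $\mathcal{F}_2(X)$ is the set of nonempty subsets of $X$ of cardinality at most 2, with the Vietoris topology (base: $\langle U_1,\dots,U_k\rangle=\{A: A\subset\bigcup_i U_i,\ A\cap U_j\neq\emptyset\ \forall j\}$, $U_i$ open in $X$). The sequential fan $S_\omega$ is obtained from the topological sum of countably many convergent sequences $T_n\cup\{x_n\}$ ($T_n$ a sequence converging to $x_n$), $n\in\omega$, by identifying all limit points $x_n$ to a single point. The Arens space $S_2$ is the set $\{\infty\}\cup\{x_n:n\in\mathbb{N}\}\cup\{x_{n,m}: n,m\}$ where each $x_{n,m}$ is isolated, basic neighborhoods of $x_n$ are $\{x_n\}\cup\{x_{n,m}: m>k\}$, and basic neighborhoods of $\infty$ are $\{\infty\}\cup\bigcup_{n>k}V_n$ with $V_n$ a neighborhood of $x_n$. *)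

From HB Require Import structures.
From mathcomp Require Import all_boot all_order all_algebra.
From mathcomp Require Import all_classical all_reals all_analysis.

Set Implicit Arguments.
Unset Strict Implicit.
Unset Printing Implicit Defensive.

Local Open Scope classical_set_scope.

(* Each space below is given by a family of basic open sets, turned into a
   topologicalType with the library factory [isSubBaseTopological]
   (index type [set T], index set = the family, [b] = identity).  Since the
   families used are bases, the generated topology is the one they generate
   as a base. *)

Definition F2 (X : Type) := {A : set X | exists x y : X, A = [set x] `|` [set y]}.

HB.instance Definition _ (X : Type) := gen_eqMixin (F2 X).
HB.instance Definition _ (X : Type) := gen_choiceMixin (F2 X).

(* <U_0, ..., U_{k-1}> = {A : A ⊆ ∪ U_i, A ∩ U_j ≠ ∅ for all j} *)
Definition vietoris_set (X : Type) (k : nat) (U : nat -> set X) : set (F2 X) :=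
  [set A | (forall x, proj1_sig A x -> exists2 i, (i < k)%N & U i x)
           /\ (forall j, (j < k)%N -> proj1_sig A `&` U j !=set0)].

Definition vietoris_base (X : topologicalType) : set (set (F2 X)) :=
  [set B | exists (k : nat) (U : nat -> set X),
     [/\ (0 < k)%N, (forall i, (i < k)%N -> open (U i)) & B = vietoris_set k U]].

HB.instance Definition _ (X : topologicalType) :=
  isSubBaseTopological.Build (F2 X) (@vietoris_base X) id.

(* None = the common limit point; Some (n, m) = m-th term of n-th sequence *)
Definition seq_fan := option (nat * nat).

HB.instance Definition _ := Choice.on seq_fan.

Definition fan_base : set (set seq_fan) :=
  [set B | (exists p : nat * nat, B = [set Some p])
        \/ (exists f : nat -> nat,
              B = [set None] `|` [set p | exists n m : nat, (f n < m)%N /\ p = Some (n, m)])].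

HB.instance Definition _ := isSubBaseTopological.Build seq_fan fan_base id.

(* None = infinity; Some (n, None) = x_n; Some (n, Some m) = x_{n,m} *)
Definition arens := option (nat * option nat).

HB.instance Definition _ := Choice.on arens.

Definition arens_nbhs_x (n k : nat) : set arens :=
  [set Some (n, None)] `|` [set p | exists2 m : nat, (k < m)%N & p = Some (n, Some m)].

Definition arens_base : set (set arens) :=
  [set B | (exists n m : nat, B = [set Some (n, Some m)])
        \/ (exists n k : nat, B = arens_nbhs_x n k)
        \/ (exists (k : nat) (f : nat -> nat),
              B = [set None] `|` \bigcup_(n in [set n | (k < n)%N]) arens_nbhs_x n (f n))].

HB.instance Definition _ := isSubBaseTopological.Build arens arens_base id.

(* [f] is a homeomorphism of [S] onto the closed subspace [range f] of [X]
   (with the subspace topology). *)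
Definition closed_embedding (S X : topologicalType) (f : S -> X) : Prop :=
  [/\ injective f, continuous f, closed (range f)
    & forall U : set S, open U -> exists2 V : set X, open V & f @` U = V `&` range f].

Definition contains_closed_copy (S X : topologicalType) : Prop :=
  exists f : S -> X, closed_embedding f.

From HB Require Import structures.
From mathcomp Require Import all_boot all_order all_algebra.
From mathcomp Require Import all_classical all_reals all_analysis.

Set Implicit Arguments.
Unset Strict Implicit.
Unset Printing Implicit Defensive.
Local Open Scope classical_set_scope.

(* Let * be the vertex of the fan S_omega and a_n, b_(n,m) the n-th, resp.
   m-th, point of its 0-th, resp. (n+1)-th, sequence.  Then infinity |-> {*},
   x_n |-> {a_n, *} and x_(n,m) |-> {a_n, b_(n,m)} is a closed embedding of
   the Arens space into F_2(S_omega): it is continuous because both of its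
   coordinates are continuous maps into the fan, and its inverse is continuous
   and its image closed because the points a_n and b_(n,m) are isolated.
   Composing with F_2(e) for a closed embedding e of S_omega into X concludes,
   since F_2 preserves closed embeddings. *)

(* The neighbourhood filter that [isSubBaseTopological] builds from the
   subbase [D]; the three spaces of the statement satisfy it by conversion. *)
Definition generated_by_subbase (T : topologicalType) (D : set (set T)) :=
  forall p : T, nbhs p = [set A | exists B,
    [/\ [set \bigcup_(i in E) i | E in subset^~ (finI_from D id)] B,
         B p & B `<=` A]].

(* [S] carries the initial topology of [f]; for injective [f] this is the
   last clause of [closed_embedding]. *)
Definition initial_map (S T : topologicalType) (f : S -> T) :=
  forall U : set S, open U -> exists2 V : set T, open V & f @^-1` V = U.

Lemma initial_mapP (S T : topologicalType) (f : S -> T) :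
  initial_map f <->
  forall x A, nbhs x A -> exists2 B, nbhs (f x) B & f @^-1` B `<=` A.
Proof.
split=> [fi x A | loc U oU].
  rewrite nbhsE => -[U [oU Ux] UA]; have [V oV eV] := fi U oU.
  exists V; last by rewrite eV.
  by apply: open_nbhs_nbhs; split => //; rewrite -[V _]/((f @^-1` V) x) eV.
exists (\bigcup_(B in [set B | open B /\ f @^-1` B `<=` U]) B).
  by apply: bigcup_open => B [].
apply/seteqP; split=> [x [B [_ sBU] Bfx] | x Ux]; first exact: sBU.
have [B + sBU] := loc x U (open_nbhs_nbhs (conj oU Ux)).
rewrite nbhsE => -[B' [oB' B'fx] sB'B].
by exists B' => //; split=> // y /sB'B /sBU.
Qed.

Section Subbase.
Variables (T : topologicalType) (D : set (set T)).
Hypothesis gen_D : generated_by_subbase D.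

Lemma subbase_open B : D B -> open B.
Proof.
move=> DB; rewrite openE => p Bp; rewrite /interior gen_D.
exists B; split => //; exists [set B]; last exact: bigcup_set1.
by move=> _ ->; exact: finI_from1.
Qed.

Lemma subbase_nbhs_ind (P : set (set T)) (p : T) :
  P setT -> (forall A B, P A -> P B -> P (A `&` B)) ->
  (forall A B, A `<=` B -> P A -> P B) ->
  (forall B, D B -> B p -> P B) -> forall A, nbhs p A -> P A.
Proof.
move=> PT PI PS PD A; rewrite gen_D => -[_ [[E sED <-] [C EC Cp] sA]].
apply: (PS C); first by move=> q Cq; apply: sA; exists C.
have [F sFD eC] := sED C EC; rewrite -eC in Cp *.
rewrite bigcap_fset big_seq; apply: big_rec => // B C' BF PC'.
apply: PI => //; apply: PD; last exact: Cp.
by have := sFD B BF; rewrite inE.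
Qed.

Lemma subbase_continuous_at (S : topologicalType) (f : S -> T) (x : S) :
  (forall B, D B -> B (f x) -> nbhs x (f @^-1` B)) -> {for x, continuous f}.
Proof.
move=> hB; apply: subbase_nbhs_ind => //; first exact: filterT.
- by move=> *; exact: filterI.
- by move=> A B AB; apply: filterS => y /AB.
Qed.

Lemma subbase_initial_map (S : topologicalType) (f : T -> S) :
  (forall x B, D B -> B x -> exists2 V, nbhs (f x) V & f @^-1` V `<=` B) ->
  initial_map f.
Proof.
move=> hB; apply/initial_mapP => x; apply: subbase_nbhs_ind => //.
- by exists setT => //; exact: filterT.
- move=> A B [V nV sVA] [W nW sWB]; exists (V `&` W); first exact: filterI.
  by move=> y [/sVA ? /sWB ?].
- by move=> A B AB [V nV sVA]; exists V => // y /sVA /AB.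
- by move=> B DB Bx; exact: hB.
Qed.

End Subbase.

Lemma preimage_eq_image_range (S T : Type) (f : S -> T) U V :
  injective f -> f @^-1` V = U <-> f @` U = V `&` range f.
Proof.
move=> fi; split=> [<- | eU].
  by apply/seteqP; split=> [_ [x Vfx <-] | y [Vy [x _ exy]]];
    [split => //; exists x | exists x; rewrite // /preimage /= exy].
apply/seteqP; split=> x.
  move=> Vfx; have : (f @` U) (f x) by rewrite eU; split => //; exists x.
  by case=> u Uu /fi <-.
move=> Ux; have : (f @` U) (f x) by exists x.
by rewrite eU => -[].
Qed.

Lemma closed_embeddingE (S T : topologicalType) (f : S -> T) :
  closed_embedding f <->
  [/\ injective f, continuous f, closed (range f) & initial_map f].
Proof.
split=> -[fi fc fr fo]; split => // U /fo [V oV eV]; exists V => //.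
  exact/(preimage_eq_image_range _ _ fi).
exact/(preimage_eq_image_range _ _ fi).
Qed.

Lemma initial_map_comp (S T U : topologicalType) (g : S -> T) (h : T -> U) :
  initial_map g -> initial_map h -> initial_map (h \o g).
Proof.
move=> gi hi A oA; have [B oB <-] := gi A oA; have [C oC <-] := hi B oB.
by exists C.
Qed.

Lemma closed_image_initial_map (S T : topologicalType) (h : S -> T) C :
  initial_map h -> closed (range h) -> closed C -> closed (h @` C).
Proof.
move=> hi hr cC; have [V oV eV] := hi _ (closed_openC cC).
suff -> : h @` C = range h `&` ~` V by apply: closedI hr _; exact: open_closedC.
apply/seteqP; split=> [_ [c Cc <-] | _ [[t _ <-] nVht]].
  split; first by exists c.
  by move=> Vhc; have : (h @^-1` V) c := Vhc; rewrite eV.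
exists t => //; apply: contrapT => nCt; apply: nVht.
by have : (~` C) t := nCt; rewrite -eV.
Qed.

Lemma closed_embedding_comp (S T U : topologicalType) (g : S -> T) (h : T -> U) :
  closed_embedding g -> closed_embedding h -> closed_embedding (h \o g).
Proof.
rewrite !closed_embeddingE => -[gi gc gr gin] [hi hc hr hin]; split.
- exact: inj_comp.
- by move=> x; exact: continuous_comp (gc x) (hc (g x)).
- by rewrite -(image_comp g h); exact: closed_image_initial_map.
- exact: initial_map_comp.
Qed.

Section F2Pairs.
Variable X : Type.

Lemma F2_val_inj : injective (fun A : F2 X => proj1_sig A).
Proof.
by move=> [a pa] [b pb] /= eab; subst b; congr exist; exact: Prop_irrelevance.
Qed.

Definition F2pair (x y : X) : F2 X :=
  exist _ ([set x] `|` [set y]) (ex_intro _ x (ex_intro _ y erefl)).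

Lemma F2_pairE (A : F2 X) : exists x y, A = F2pair x y.
Proof. by case: A => a [x [y e]]; exists x, y; apply: F2_val_inj. Qed.

Lemma F2pairC x y : F2pair x y = F2pair y x.
Proof. by apply: F2_val_inj; rewrite /= setUC. Qed.

Lemma F2pair_inj x y x' y' : F2pair x y = F2pair x' y' ->
  (x = x' /\ y = y') \/ (x = y' /\ y = x').
Proof.
move=> /(congr1 (fun A : F2 X => proj1_sig A)) /= e.
have hx : ([set x'] `|` [set y']) x by rewrite -e; left.
have hy : ([set x'] `|` [set y']) y by rewrite -e; right.
have hx' : ([set x] `|` [set y]) x' by rewrite e; left.
have hy' : ([set x] `|` [set y]) y' by rewrite e; right.
by move: hx hy hx' hy' => /= [] -> [] ->; intuition congruence.
Qed.

Lemma F2_nonempty (A : F2 X) : proj1_sig A !=set0.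
Proof. by have [x [y ->]] := F2_pairE A; exists x; left. Qed.

Lemma eq_vietoris_set k (U V : nat -> set X) :
  (forall i, (i < k)%N -> U i = V i) -> vietoris_set k U = vietoris_set k V.
Proof.
move=> eUV; apply/seteqP; split=> A [cov hit]; split=> [x /cov [i ik] | j jk].
- by rewrite eUV //; exists i.
- by rewrite -eUV //; exact: hit.
- by rewrite -eUV //; exists i.
- by rewrite eUV //; exact: hit.
Qed.

End F2Pairs.

Section F2map.
Variables (X Y : Type) (f : X -> Y).

Lemma F2map_subproof (A : F2 X) :
  exists y y', f @` proj1_sig A = [set y] `|` [set y'].
Proof.
have [x [x' ->]] := F2_pairE A.
by exists (f x), (f x'); rewrite image_setU !image_set1.
Qed.

Definition F2map (A : F2 X) : F2 Y :=
  exist _ (f @` proj1_sig A) (F2map_subproof A).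

Lemma F2map_pair x x' : F2map (F2pair x x') = F2pair (f x) (f x').
Proof. by apply: F2_val_inj; rewrite /= image_setU !image_set1. Qed.

Lemma F2map_inj : injective f -> injective F2map.
Proof.
move=> fi A B /(congr1 (fun A : F2 Y => proj1_sig A)) /= eAB.
apply: F2_val_inj; apply/seteqP; split=> x Ax.
  have : (f @` proj1_sig B) (f x) by rewrite -eAB; exists x.
  by case=> z Bz /fi <-.
have : (f @` proj1_sig A) (f x) by rewrite eAB; exists x.
by case=> z Az /fi <-.
Qed.

Lemma preimage_F2map_vietoris_set k (U : nat -> set Y) :
  F2map @^-1` vietoris_set k U = vietoris_set k (fun i => f @^-1` U i).
Proof.
apply/seteqP; split=> A [/= cov hit]; split.
- by move=> x Ax; apply: cov; exists x.
- by move=> j jk; have [_ [[x Ax <-] Ufx]] := hit j jk; exists x.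
- by move=> _ [x Ax <-]; exact: cov.
- move=> j jk; have [x [Ax Ufx]] := hit j jk.
  by exists (f x); split => //; exists x.
Qed.

Lemma range_F2map : range F2map = [set B | proj1_sig B `<=` range f].
Proof.
apply/seteqP; split=> [_ [A _ <-] _ [x _ <-] | B sB]; first by exists x.
have [y [y' eB]] := F2_pairE B; rewrite eB /= in sB.
have [x _ fx] := sB y (or_introl erefl).
have [x' _ fx'] := sB y' (or_intror erefl).
by exists (F2pair x x') => //; rewrite F2map_pair fx fx'.
Qed.

End F2map.

Lemma F2_subbase (X : topologicalType) : generated_by_subbase (@vietoris_base X).
Proof. by []. Qed.

Lemma nbhs_forall_ltn (T : topologicalType) (x : T) k (P : nat -> set T) :
  (forall j, (j < k)%N -> nbhs x (P j)) ->
  nbhs x [set y | forall j, (j < k)%N -> P j y].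
Proof.
move=> hP; have : \forall y \near x, forall j : 'I_k, P j y.
  by apply: filter_forall => j; exact: hP.
by apply: filterS => y hy j jk; exact: (hy (Ordinal jk)).
Qed.

Section Vietoris.
Variable X : topologicalType.

Lemma open_vietoris_set k (U : nat -> set X) :
  (0 < k)%N -> (forall i, (i < k)%N -> open (U i)) -> open (vietoris_set k U).
Proof. by move=> k0 oU; apply: (subbase_open (@F2_subbase X)); exists k, U. Qed.

Lemma open_F2_sub (U : set X) :
  open U -> open [set A : F2 X | proj1_sig A `<=` U].
Proof.
move=> oU.
suff -> : [set A : F2 X | proj1_sig A `<=` U] = vietoris_set 1 (fun=> U).
  by apply: open_vietoris_set => // i _.
apply/seteqP; split=> A; last by move=> [cov _] x /cov [].
move=> AU; split=> [x /AU Ux | [|//] _]; first by exists 0%N.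
by have [x Ax] := F2_nonempty A; exists x; split => //; exact: AU.
Qed.

Lemma open_F2_meets (U : set X) :
  open U -> open [set A : F2 X | proj1_sig A `&` U !=set0].
Proof.
move=> oU; pose V i : set X := if i is 0 then setT else U.
suff -> : [set A : F2 X | proj1_sig A `&` U !=set0] = vietoris_set 2 V.
  by apply: open_vietoris_set => // -[|i] _; [exact: openT | exact: oU].
apply/seteqP; split=> A; last by move=> [_ /(_ 1%N isT)].
move=> AU; split=> [x _ | [|[|//]] _ //]; first by exists 0%N.
by have [x Ax] := F2_nonempty A; exists x.
Qed.

Lemma open_F2_sub_meets (U V : set X) : open U -> open V ->
  open ([set A : F2 X | proj1_sig A `<=` U `|` V] `&`
        [set A | proj1_sig A `&` V !=set0]).
Proof.
by move=> oU oV; apply: openI; [apply/open_F2_sub/openU | exact: open_F2_meets].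
Qed.

Lemma open_F2pair_set1 (x y : X) :
  open [set x] -> open [set y] -> open [set F2pair x y].
Proof.
move=> ox oy; suff -> : [set F2pair x y] =
    ([set A | proj1_sig A `<=` [set x] `|` [set y]] `&`
     [set A | proj1_sig A `&` [set y] !=set0]) `&`
    [set A | proj1_sig A `&` [set x] !=set0].
  by apply: openI; [exact: open_F2_sub_meets | exact: open_F2_meets].
apply/seteqP; split=> [A -> | A [[sA [v [Av ev]]] [u [Au eu]]]].
  by split; [split=> //; exists y | exists x]; split=> //; [right | left].
apply: F2_val_inj; apply/seteqP; split=> [z /sA // | z /= [->|->]].
  by rewrite -eu.
by rewrite -ev.
Qed.

Lemma F2pair_continuous (S : topologicalType) (f g : S -> X) :
  continuous f -> continuous g -> continuous (fun s => F2pair (f s) (g s)).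
Proof.
move=> fc gc s; apply: (subbase_continuous_at (@F2_subbase X)).
move=> _ [k [U [_ oU ->]]] [/= cov hit].
have near_as x : nbhs x [set y | forall j, (j < k)%N -> U j x -> U j y].
  apply: nbhs_forall_ltn => j jk; have [Ujx|nUjx] := pselect (U j x).
    by apply: filterS (open_nbhs_nbhs (conj (oU j jk) Ujx)) => y Ujy _.
  by apply: nearW => y /nUjx.
have nf : nbhs s (f @^-1` _) := fc s _ (near_as (f s)).
have ng : nbhs s (g @^-1` _) := gc s _ (near_as (g s)).
apply: filterS (filterI nf ng) => t [/= ft gt]; split=> [_ [->|->] | j jk].
- by have [i ik Ui] := cov (f s) (or_introl erefl); exists i => //; exact: ft.
- by have [i ik Ui] := cov (g s) (or_intror erefl); exists i => //; exact: gt.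
- have [_ [[->|->] Uj]] := hit j jk.
    by exists (f t); split; [left | exact: ft].
  by exists (g t); split; [right | exact: gt].
Qed.

End Vietoris.

Section F2mapTopology.
Variables (S X : topologicalType) (f : S -> X).

Lemma F2map_continuous : continuous f -> continuous (F2map f).
Proof.
move=> fc A; apply: (subbase_continuous_at (@F2_subbase X)).
move=> _ [k [U [k0 oU ->]]] UA; apply: open_nbhs_nbhs; split => //.
rewrite preimage_F2map_vietoris_set; apply: open_vietoris_set => // i ik.
by apply: open_comp (oU i ik) => x _; exact: fc.
Qed.

Lemma F2map_initial_map : initial_map f -> initial_map (F2map f).
Proof.
move=> fin; apply: (subbase_initial_map (@F2_subbase S)).
move=> A _ [k [W [k0 oW ->]]] WA.
have /choice [V hV] : forall i, exists V : set X,
    (i < k)%N -> open V /\ f @^-1` V = W i.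
  move=> i; have [ik|_] := boolP (i < k)%N; last by exists set0.
  by have [V oV eV] := fin _ (oW i ik); exists V.
have eV : F2map f @^-1` vietoris_set k V = vietoris_set k W.
  rewrite preimage_F2map_vietoris_set; apply: eq_vietoris_set => i ik.
  by case: (hV i ik).
exists (vietoris_set k V); last by rewrite eV.
apply: open_nbhs_nbhs; split.
  by apply: open_vietoris_set => // i ik; case: (hV i ik).
by have : (F2map f @^-1` vietoris_set k V) A by rewrite eV.
Qed.

Lemma closed_range_F2map : closed (range f) -> closed (range (F2map f)).
Proof.
move=> fr; rewrite range_F2map.
suff -> : [set A : F2 X | proj1_sig A `<=` range f] =
    ~` [set A | proj1_sig A `&` ~` range f !=set0].
  by apply: open_closedC; apply: open_F2_meets; rewrite openC.
apply/seteqP; split=> A; first by move=> sA [x [/sA]].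
by move=> nA x Ax; apply: contrapT => nfx; apply: nA; exists x.
Qed.

Lemma closed_embedding_F2map :
  closed_embedding f -> closed_embedding (F2map f).
Proof.
rewrite !closed_embeddingE => -[fi fc fr fin]; split.
- exact: F2map_inj.
- exact: F2map_continuous.
- exact: closed_range_F2map.
- exact: F2map_initial_map.
Qed.

End F2mapTopology.

Lemma fan_subbase : generated_by_subbase fan_base. Proof. by []. Qed.

Definition fan_tail (g : nat -> nat) : set seq_fan :=
  [set None] `|` [set p | exists n m : nat, (g n < m)%N /\ p = Some (n, m)].

Lemma fan_tail_Some g n m : fan_tail g (Some (n, m)) <-> (g n < m)%N.
Proof.
split=> [[//|[n' [m' [gm [-> ->]]]]] // | gm].
by right; exists n, m.
Qed.

Lemma open_fan_tail g : open (fan_tail g).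
Proof. by apply: (subbase_open fan_subbase); right; exists g. Qed.

Lemma open_fan_set1 s : open [set Some s : seq_fan].
Proof. by apply: (subbase_open fan_subbase); left; exists s. Qed.

Lemma nbhs_None_fan_tail (A : set seq_fan) :
  nbhs (None : seq_fan) A -> exists g, fan_tail g `<=` A.
Proof.
move: A; apply: (subbase_nbhs_ind fan_subbase
  (P := fun A => exists g, fan_tail g `<=` A)).
- by exists (fun=> 0%N).
- move=> B C [g sB] [h sC]; exists (fun n => maxn (g n) (h n)).
  move=> _ [->|[n [m [+ ->]]]]; first by split; [apply: sB | apply: sC]; left.
  by rewrite gtn_max => /andP[gm hm]; split; [apply: sB | apply: sC];
    apply/fan_tail_Some.
- by move=> B C BC [g sB]; exists g => p /sB /BC.
- by move=> _ [[s ->] // | [g ->]] _; exists g.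
Qed.

Lemma nbhs_F2pair_None k c :
  nbhs (F2pair None (Some c) : F2 seq_fan)
    ([set A | proj1_sig A `<=` fan_tail (fun=> k) `|` [set Some c]] `&`
     [set A | proj1_sig A `&` [set Some c] !=set0]).
Proof.
apply: open_nbhs_nbhs; split.
  by apply: open_F2_sub_meets; [exact: open_fan_tail | exact: open_fan_set1].
split; first by move=> _ [->|->]; [left; left | right].
by exists (Some c); split; [right |].
Qed.

Lemma arens_subbase : generated_by_subbase arens_base. Proof. by []. Qed.

Definition arens_nbhs_inf (k : nat) (f : nat -> nat) : set arens :=
  [set None] `|` \bigcup_(n in [set n | (k < n)%N]) arens_nbhs_x n (f n).

Lemma open_arens_set1 n m : open [set Some (n, Some m) : arens].
Proof. by apply: (subbase_open arens_subbase); left; exists n, m. Qed.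

Lemma open_arens_nbhs_x n k : open (arens_nbhs_x n k).
Proof. by apply: (subbase_open arens_subbase); right; left; exists n, k. Qed.

Lemma open_arens_nbhs_inf k f : open (arens_nbhs_inf k f).
Proof. by apply: (subbase_open arens_subbase); right; right; exists k, f. Qed.

Lemma open_set1_continuous_at (S T : topologicalType) (f : S -> T) (x : S) :
  open [set x] -> {for x, continuous f}.
Proof.
move=> ox A /nbhs_singleton Afx.
by apply: filterS (open_nbhs_nbhs (conj ox erefl)) => _ ->.
Qed.

Definition arens_fst (p : arens) : seq_fan :=
  if p is Some (n, _) then Some (0%N, n) else None.

Definition arens_snd (p : arens) : seq_fan :=
  if p is Some (n, Some m) then Some (n.+1, m) else None.

Lemma arens_fst_continuous : continuous arens_fst.
Proof.
case=> [[n [m|]]|]; first exact/open_set1_continuous_at/open_arens_set1.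
  move=> A /nbhs_singleton An.
  apply: filterS (open_nbhs_nbhs
    (conj (open_arens_nbhs_x n 0) (or_introl erefl))).
  by move=> _ [->|[m _ ->]].
move=> A /nbhs_None_fan_tail [g sA].
apply: filterS (open_nbhs_nbhs
  (conj (open_arens_nbhs_inf (g 0%N) (fun=> 0%N)) (or_introl erefl))).
by move=> _ [->|[n gn [->|[m _ ->]]]]; apply: sA;
  [left | exact/fan_tail_Some..].
Qed.

Lemma arens_snd_continuous : continuous arens_snd.
Proof.
case=> [[n [m|]]|]; first exact/open_set1_continuous_at/open_arens_set1.
  move=> A /nbhs_None_fan_tail [g sA].
  apply: filterS (open_nbhs_nbhs
    (conj (open_arens_nbhs_x n (g n.+1)) (or_introl erefl))).
  by move=> _ [->|[m gm ->]]; apply: sA; [left | exact/fan_tail_Some].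
move=> A /nbhs_None_fan_tail [g sA].
apply: filterS (open_nbhs_nbhs
  (conj (open_arens_nbhs_inf 0 (fun n => g n.+1)) (or_introl erefl))).
by move=> _ [->|[n _ [->|[m gm ->]]]]; apply: sA;
  [left | left | exact/fan_tail_Some].
Qed.

Definition arens_embed (p : arens) : F2 seq_fan :=
  F2pair (arens_fst p) (arens_snd p).

Lemma arens_embed_continuous : continuous arens_embed.
Proof. exact: F2pair_continuous arens_fst_continuous arens_snd_continuous. Qed.

Lemma arens_embed_inj : injective arens_embed.
Proof.
move=> p q e; have {e} := F2pair_inj e.
by case: p q => [[n [m|]]|] [[n' [m'|]]|] /=; intuition congruence.
Qed.

Lemma arens_embed_mem_fst n q :
  proj1_sig (arens_embed q) (Some (0%N, n)) -> exists o, q = Some (n, o).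
Proof. by case: q => [[n' [m'|]]|] /= [] // [->]; eexists. Qed.

Lemma arens_embed_mem_snd n m q :
  proj1_sig (arens_embed q) (Some (n.+1, m)) -> q = Some (n, Some m).
Proof. by case: q => [[n' [m'|]]|] /= [] // [-> ->]. Qed.

Lemma arens_embed_nbhs_set1 n m (B : set arens) : B (Some (n, Some m)) ->
  exists2 V, nbhs (arens_embed (Some (n, Some m))) V &
    arens_embed @^-1` V `<=` B.
Proof.
move=> Bp; exists [set arens_embed (Some (n, Some m))].
  apply: open_nbhs_nbhs; split=> //.
  by apply: open_F2pair_set1; exact: open_fan_set1.
by move=> q /arens_embed_inj ->.
Qed.

Lemma arens_embed_nbhs_x n k :
  exists2 V, nbhs (arens_embed (Some (n, None))) V &
    arens_embed @^-1` V `<=` arens_nbhs_x n k.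
Proof.
have nV := nbhs_F2pair_None k (0%N, n); rewrite F2pairC in nV.
eexists; first exact: nV.
move=> q [/= sub [z [+ eza]]]; rewrite eza.
move=> /arens_embed_mem_fst [[m|] eq]; last by left.
rewrite eq in sub *; right; exists m => //.
by case: (sub (Some (n.+1, m)) (or_intror erefl)) => [/fan_tail_Some | []].
Qed.

Lemma arens_embed_nbhs_inf K F : exists2 V, nbhs (arens_embed None) V &
  arens_embed @^-1` V `<=` arens_nbhs_inf K F.
Proof.
pose h i := if i is i'.+1 then F i' else K.
exists [set A | proj1_sig A `<=` fan_tail h].
  apply: open_nbhs_nbhs; split; first exact/open_F2_sub/open_fan_tail.
  by move=> _ [->|->]; left.
case=> [[n o]|] /= sub; last by left.
have /fan_tail_Some Kn := sub _ (or_introl erefl).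
right; exists n => //; case: o sub => [m|] sub; last by left.
by right; exists m => //; apply/(fan_tail_Some h n.+1)/sub; right.
Qed.

Lemma arens_embed_initial_map : initial_map arens_embed.
Proof.
apply: (subbase_initial_map arens_subbase).
move=> p _ [[n [m ->]] | [[n [k ->]] | [K [F ->]]]].
- by move=> ->; apply: arens_embed_nbhs_set1.
- case=> [-> | [m km ->]]; first exact: arens_embed_nbhs_x.
  by apply: arens_embed_nbhs_set1; right; exists m.
- case=> [-> | [n Kn [-> | [m Fm ->]]]]; first exact: arens_embed_nbhs_inf.
    have [V nV sV] := arens_embed_nbhs_x n (F n).
    by exists V => // q /sV Bq; right; exists n.
  by apply: arens_embed_nbhs_set1; right; exists n => //; right; exists m.
Qed.

Lemma closed_range_arens_embed : closed (range arens_embed).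
Proof.
rewrite closedE => Y nnY; apply: contrapT => nY; apply: nnY.
have [s [t eY]] := F2_pairE Y; rewrite {Y}eY in nY *.
wlog: s t nY / s = None => [hw | s0].
  case: s nY => [a|] nY; last exact: hw.
  case: t nY => [b|] nY; last by rewrite F2pairC in nY *; exact: hw.
  have oab := open_F2pair_set1 (open_fan_set1 a) (open_fan_set1 b).
  by apply: filterS (open_nbhs_nbhs (conj oab erefl)) => _ ->.
rewrite {s}s0 in nY *; case: t nY => [[[|i] j]|] nY.
- by exfalso; apply: nY; exists (Some (j, None)) => //; exact: F2pairC.
- apply: filterS (nbhs_F2pair_None i (i.+1, j)).
  move=> Z [sub [z [+ ezb]]] [q _ eq]; rewrite ezb -eq.
  move=> /arens_embed_mem_snd eq'; rewrite -eq eq' in sub.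
  case: (sub _ (or_introl erefl)) => [/fan_tail_Some /= | [] //].
  by rewrite ltnn.
- by exfalso; apply: nY; exists None.
Qed.

Lemma closed_embedding_arens_embed : closed_embedding arens_embed.
Proof.
apply/closed_embeddingE; split.
- exact: arens_embed_inj.
- exact: arens_embed_continuous.
- exact: closed_range_arens_embed.
- exact: arens_embed_initial_map.
Qed.

Theorem proposition3p8 (X : topologicalType) :
  hausdorff_space X -> regular_space X ->
  contains_closed_copy seq_fan X ->
  contains_closed_copy arens (F2 X).
Proof.
move=> _ _ [f f_ce]; exists (F2map f \o arens_embed).
exact: closed_embedding_comp closed_embedding_arens_embed
  (closed_embedding_F2map f_ce).
Qed.
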